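(* For any $1\le y<x$ and any $v\ge \log n_{<y}$, one has (for every outcome of the random model) \[ \Delta(n_{<x})\ge \frac{\tau(n_{<y})}{2v+1}\cdot\Delta^{(v)}(n_{[y,x)}). \]
   Context: $\Delta(n)\coloneqq \max_{u\in\mathbb{R}}\#\{d\mid n: e^u<d\le e^{u+1}\}$, and for $v>0$, $\Delta^{(v)}(n)\coloneqq\max_{u\in\mathbb{R}}\#\{d\mid n: e^u<d\le e^{u+v}\}$; $\tau(n)$ is the number of divisors of $n$. Random model: for each prime $p$, $n_p$ equals $1$ with probability $\frac{p}{p+1}$ and $p$ with probability $\frac1{p+1}$, independently over $p$; $n_{<z}\coloneqq\prod_{p<z}n_p$ and $n_{[y,x)}\coloneqq\prod_{y\le p<x}n_p$, so $n_{<x}=n_{<y}n_{[y,x)}$. *)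

From HB Require Import structures.
From mathcomp Require Import all_boot all_order all_algebra.
From mathcomp Require Import all_classical all_reals all_analysis.
Set Implicit Arguments. Unset Strict Implicit. Unset Printing Implicit Defensive.
Import Order.TTheory GRing.Theory Num.Theory.
Local Open Scope ring_scope.

Definition tau (n : nat) : nat := size (divisors n).

Definition divcount {R : realType} (n : nat) (v u : R) : nat :=
  count (fun d : nat => (expR u < d%:R) && (d%:R <= expR (u + v))) (divisors n).

(* Delta^(v)(n) = max_u #{ d | n : e^u < d <= e^(u+v) } (as a supremum of a
   finite nonempty set of reals, hence a maximum). *)
Definition DeltaV {R : realType} (n : nat) (v : R) : R :=
  sup [set (divcount n v u)%:R | u in [set: R]].

Definition Delta {R : realType} (n : nat) : R := DeltaV n 1.

(* An outcome of the random model: omega p = true  iff  n_p = p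
   (and n_p = 1 otherwise); only primes p matter. *)

Definition n_lt {R : realType} (omega : nat -> bool) (z : R) : nat :=
  \prod_(0 <= p < (Num.truncn z).+1 | prime p && (p%:R < z) && omega p) p.

Definition n_int {R : realType} (omega : nat -> bool) (y x : R) : nat :=
  \prod_(0 <= p < (Num.truncn x).+1 | prime p && (y <= p%:R) && (p%:R < x) && omega p) p.

From HB Require Import structures.
From mathcomp Require Import all_boot all_order all_algebra.
From mathcomp Require Import all_classical all_reals all_analysis.
From mathcomp Require Import lra.

Set Implicit Arguments.
Unset Strict Implicit.
Unset Printing Implicit Defensive.

Import Order.TTheory GRing.Theory Num.Theory.
Local Open Scope ring_scope.

(* Let a = n_{<y} and b = n_{[y,x)}, coprime with ab = n_{<x}.  Take a window
   (e^u, e^(u+v)] holding Delta^(v)(b) divisors e of b.  For every divisor d of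
   a, d <= a <= e^v, so the products d e are divisors of ab in the window
   (e^u, e^(u+2v)]; they are pairwise distinct since d = gcd(a, d e).  That
   window is covered by at most 2v+1 windows of length 1, each containing at
   most Delta(ab) divisors. *)

Lemma gcdn_mul_dvd_coprime a b d e :
  coprime a b -> (d %| a)%N -> (e %| b)%N -> gcdn a (d * e) = d.
Proof.
move=> co_ab d_a e_b.
by rewrite Gauss_gcdl ?(coprime_dvdr e_b) //; apply/gcdn_idPr.
Qed.

Section DivisorWindows.
Variable R : realType.
Implicit Types (u v w : R).

Lemma divcount_le_DeltaV N w u : (divcount N w u)%:R <= DeltaV N w :> R.
Proof.
apply: ub_le_sup; last by exists u.
by exists (tau N)%:R => _ [t _ <-]; rewrite ler_nat count_size.
Qed.

Lemma DeltaV_le N w (c : R) :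
  (forall u, (divcount N w u)%:R <= c) -> DeltaV N w <= c.
Proof.
move=> divcount_le_c; apply: ge_sup; first by exists (divcount N w 0)%:R, 0.
by move=> _ [u _ <-].
Qed.

Lemma divcount0 N u : divcount N 0 u = 0%N.
Proof.
rewrite /divcount (@eq_count _ _ pred0) ?count_pred0 // => d /=.
by rewrite addr0 lt_le_asym.
Qed.

Lemma divcountD N w1 w2 u :
  (divcount N (w1 + w2) u <= divcount N w1 u + divcount N w2 (u + w1))%N.
Proof.
rewrite /divcount -count_predUI; apply: leq_trans (leq_addr _ _).
apply: sub_count => d /= /andP[lt_ud le_dw].
case: (leP d%:R (expR (u + w1))) => lt_dw1 /=; first by rewrite lt_ud.
by rewrite -addrA le_dw orbT.
Qed.

Lemma divcount_le_Delta N (m : nat) u :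
  (divcount N m%:R u)%:R <= m%:R * Delta N :> R.
Proof.
elim: m u => [|m IHm] u; first by rewrite divcount0 mul0r.
apply: le_trans (_ : (divcount N m%:R u + divcount N 1 (u + m%:R))%:R <= _).
  by rewrite ler_nat -natr1 divcountD.
by rewrite natrD -natr1 mulrDl mul1r lerD ?IHm ?divcount_le_DeltaV.
Qed.

Lemma tau_mul_divcount_le a b v w u :
  (0 < a)%N -> (0 < b)%N -> coprime a b -> ln (a%:R : R) + v <= w ->
  (tau a * divcount b v u <= divcount (a * b) w u)%N.
Proof.
move=> a_gt0 b_gt0 co_ab le_w.
pose L := [seq (d * e)%N | d <- divisors a,
             e <- [seq e <- divisors b | (expR u < e%:R) && (e%:R <= expR (u + v))]].
have -> : (tau a * divcount b v u = size L)%N by rewrite size_allpairs size_filter.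
rewrite /divcount -size_filter; apply: uniq_leq_size.
  apply: allpairs_uniq; [exact: divisors_uniq | exact/filter_uniq/divisors_uniq |].
  move=> [d e] [d' e'] /allpairsP[[d1 e1] [/= d1a e1b [-> ->]]].
  move=> /allpairsP[[d2 e2] [/= d2a e2b [-> ->]]] /= de_eq.
  rewrite !mem_filter -!dvdn_divisors // in d1a d2a e1b e2b.
  case/andP: e1b => _ e1b; case/andP: e2b => _ e2b.
  have d12 : d1 = d2.
    rewrite -(gcdn_mul_dvd_coprime co_ab d1a e1b) de_eq.
    exact: gcdn_mul_dvd_coprime co_ab d2a e2b.
  rewrite -d12 in de_eq *; apply/eqP; rewrite xpair_eqE eqxx /=.
  by rewrite -(eqn_pmul2l (dvdn_gt0 a_gt0 d1a)) de_eq.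
move=> _ /allpairsP[[d e] [/= da /[!mem_filter] /andP[/andP[lt_ue le_ev] eb] ->]].
rewrite -!dvdn_divisors // in da eb.
rewrite -dvdn_divisors ?muln_gt0 ?a_gt0 // dvdn_mul // andbT.
apply/andP; split.
  by apply: lt_le_trans lt_ue _; rewrite ler_nat leq_pmull // (dvdn_gt0 a_gt0).
rewrite natrM; apply: le_trans (_ : a%:R * expR (u + v) <= _).
  by rewrite ler_pM // ler_nat dvdn_leq.
by rewrite -{1}(lnK (_ : a%:R \is Num.pos)) ?posrE ?ltr0n // -expRD ler_expR; lra.
Qed.

Lemma tau_gt0 N : (0 < tau N)%N.
Proof. by rewrite /tau; case: (divisors N) (divisor1 N). Qed.

Lemma DeltaV_coprime_mul_le a b v :
  (0 < a)%N -> (0 < b)%N -> coprime a b -> ln (a%:R : R) <= v ->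
  (tau a)%:R / (2 * v + 1) * DeltaV b v <= Delta (a * b).
Proof.
move=> a_gt0 b_gt0 co_ab le_lna_v.
have v_ge0 : 0 <= v by apply: le_trans le_lna_v; rewrite ln_ge0 // ler1n.
pose m := (Num.truncn (2 * v)).+1.
have le_2v_m : 2 * v <= m%:R by apply/ltW/truncnS_gt.
have le_m_2v1 : m%:R <= 2 * v + 1 by rewrite /m -natr1 lerD2r truncn_le; lra.
have tau_pos : 0 < (tau a)%:R :> R by rewrite ltr0n tau_gt0.
have tau_DeltaV : DeltaV b v <= (2 * v + 1) * Delta (a * b) / (tau a)%:R.
  apply: DeltaV_le => u; rewrite ler_pdivlMr // mulrC -natrM.
  apply: le_trans (_ : (divcount (a * b) m%:R u)%:R <= _).
    by rewrite ler_nat tau_mul_divcount_le //; lra.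
  apply: le_trans (divcount_le_Delta _ _ _) _.
  by rewrite ler_wpM2r // (le_trans _ (divcount_le_DeltaV _ _ 0)).
rewrite mulrAC ler_pdivrMr; last lra.
by rewrite -ler_pdivlMl // mulrC [Delta _ * _]mulrC.
Qed.

End DivisorWindows.

Section RandomModel.
Variables (R : realType) (omega : nat -> bool).

Lemma n_lt_gt0 (z : R) : (0 < n_lt omega z)%N.
Proof. by apply: prodn_cond_gt0 => p /andP[/andP[/prime_gt0]]. Qed.

Lemma n_int_gt0 (y x : R) : (0 < n_int omega y x)%N.
Proof. by apply: prodn_cond_gt0 => p /andP[/andP[/andP[/prime_gt0]]]. Qed.

Lemma coprime_n_lt_n_int (y x : R) : coprime (n_lt omega y) (n_int omega y x).
Proof.
pose small : nat_pred := [pred p | p%:R < y].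
apply: (@pnat_coprime small); rewrite /n_lt /n_int.
  elim/big_ind: _ => // [m n|p /andP[/andP[p_pr p_lt_y] _]].
    by rewrite pnatM => ->.
  by rewrite pnatE.
elim/big_ind: _ => // [m n|p /andP[/andP[/andP[p_pr y_le_p] _] _]].
  by rewrite pnatM => ->.
by rewrite pnatE // !inE -leNgt.
Qed.

Lemma n_lt_split (y x : R) : 0 <= y -> y <= x ->
  n_lt omega x = (n_lt omega y * n_int omega y x)%N.
Proof.
move=> y_ge0 le_yx; rewrite /n_lt /n_int (bigID (fun p : nat => p%:R < y)) /=.
congr (_ * _)%N; last first.
  apply: eq_bigl => p; rewrite -leNgt.
  by case: (prime p) (omega p) (y <= _) (_ < x) => [] [] [] [].
rewrite [RHS](big_nat_widen _ _ (Num.truncn x).+1) ?ltnS ?le_truncn //.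
apply: eq_bigl => p; case: (ltrP p%:R y) => [p_lt_y|]; last by rewrite !andbF.
by rewrite ltnS truncn_ge_nat ?(ltW p_lt_y) // (lt_le_trans p_lt_y le_yx) !andbT.
Qed.

End RandomModel.

Theorem lemma3p1 (R : realType) (omega : nat -> bool) (x y v : R) :
  1 <= y -> y < x -> ln ((n_lt omega y)%:R : R) <= v ->
  (tau (n_lt omega y))%:R / (2 * v + 1) * DeltaV (n_int omega y x) v
    <= Delta (n_lt omega x) :> R.
Proof.
move=> y_ge1 lt_yx le_ln_v.
rewrite (n_lt_split omega (le_trans ler01 y_ge1) (ltW lt_yx)).
by apply: DeltaV_coprime_mul_le; rewrite ?n_lt_gt0 ?n_int_gt0 ?coprime_n_lt_n_int.
Qed.
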